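(* Let $F$ be a probability distribution over $[a,\infty)$, $a\ge0$, such that $\mathrm{Rev}(F^m)<\infty$. For $b\ge a$ let $F_b$ denote the truncation of $F$ to $[a,b]$. If $\lim_{b\to\infty}\mathrm{Rev}(F_b^m)$ exists (converges), then $\lim_{b\to\infty}\mathrm{Rev}(F_b^m)=\mathrm{Rev}(F^m)$.
   Context: For a distribution $G$ on $\mathbb R_+^m$, $\mathrm{Rev}(G)$ is the supremum of the expected revenue over all (possibly randomized) incentive compatible and individually rational mechanisms for selling $m$ items to a single buyer with additive valuations whose value vector is drawn from $G$. $F^m$ denotes the product distribution (values i.i.d. from $F$). The truncation $F_b$ is the distribution on $[a,b]$ with cdf $F_b(x)=F(x)/F(b)$ for $x\in[a,b]$. *)

From HB Require Import structures.
From mathcomp Require Import all_boot all_order all_algebra.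
From mathcomp Require Import all_classical all_reals.
From mathcomp Require Import ereal topology normedtype sequences measure lebesgue_measure lebesgue_integral probability.

Set Implicit Arguments.
Unset Strict Implicit.
Unset Printing Implicit Defensive.

Import Order.TTheory GRing.Theory Num.Theory.
Local Open Scope classical_set_scope.
Local Open Scope ring_scope.

Section Auction.
Variables (R : realType) (m : nat).

Definition types : set (m.-tuple R) := [set v | forall i : 'I_m, 0 <= tnth v i].

(* buyer of type v reports v' : additive expected utility for the lottery
   q v' (allocation probabilities of the m items) and expected payment p v' *)
Definition utility (q : m.-tuple R -> 'I_m -> R) (p : m.-tuple R -> R)
  (v v' : m.-tuple R) : R :=
  \sum_(i < m) tnth v i * q v' i - p v'.

Definition IC_IR_mechanism (q : m.-tuple R -> 'I_m -> R) (p : m.-tuple R -> R) : Prop :=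
  [/\ (forall v, types v -> forall i, 0 <= q v i <= 1),
      (forall v v', types v -> types v' -> utility q p v v' <= utility q p v v),
      (forall v, types v -> 0 <= utility q p v v) &
      measurable_fun types p].

Definition Rev (G : probability (m.-tuple R) R) : \bar R :=
  ereal_sup [set r | exists q p, IC_IR_mechanism q p /\
                        r = (\int[G]_(v in types) (p v)%:E)%E].

Definition is_iid_product (G : probability (m.-tuple R) R) (P : set R -> \bar R) : Prop :=
  forall A : 'I_m -> set R, (forall i, measurable (A i)) ->
    G [set v | forall i, A i (tnth v i)] = (\prod_(i < m) P (A i))%E.

End Auction.

Definition truncation (R : realType) (F : probability R R) (a b : R) : set R -> \bar R :=
  fun A => (F (A `&` `[a, b]%classic) / F `[a, b]%classic)%E.

From HB Require Import structures.
From mathcomp Require Import all_boot all_order all_algebra.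
From mathcomp Require Import all_classical all_reals.
From mathcomp Require Import ereal topology normedtype sequences measure lebesgue_measure lebesgue_integral probability.
From mathcomp Require Import measurable_realfun numfun realfun.
From mathcomp Require Import lra.

(* Every mechanism may be normalized so that the zero type pays nothing; its
   payment is then nonnegative on the type space and revenue does not drop.
   The truncated product distribution F_b^m has density F([a,b])^-m >= 1 with
   respect to F^m on the box [a,b]^m and vanishes outside it.  Hence
   Rev(F_b^m) <= F([a,b])^-m Rev(F^m), whose limit is Rev(F^m); conversely the
   revenue of a fixed normalized mechanism on the box [a,b0]^m is at most
   Rev(F_b^m) for all b >= b0, and these revenues exhaust the whole revenue
   under F^m by monotone convergence. *)

Set Implicit Arguments.
Unset Strict Implicit.
Unset Printing Implicit Defensive.

Import Order.TTheory GRing.Theory Num.Theory numFieldNormedType.Exports.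
Local Open Scope classical_set_scope.
Local Open Scope ring_scope.

Section tuple_rectangles.
Variables (R : realType) (m : nat).

Definition rect (A : 'I_m -> set R) : set (m.-tuple R) :=
  [set v | forall i, A i (tnth v i)].

Definition rects : set (set (m.-tuple R)) :=
  [set rect A | A in [set A | forall i, measurable (A i)]].

Lemma measurable_rect A : (forall i, measurable (A i)) -> measurable (rect A).
Proof.
move=> mA.
have -> : rect A = \bigcap_(i in [set: 'I_m]) ((fun v => tnth v i) @^-1` A i).
  by apply/seteqP; split => v /= Av i; [move=> _|]; exact: Av.
apply: fin_bigcap_measurable; first exact: finite_finset.
by move=> i _; rewrite -[X in measurable X]setTI; exact: measurable_tnth.
Qed.

Lemma setI_rect A B : rect A `&` rect B = rect (fun i => A i `&` B i).
Proof.
apply/seteqP; split => v /=; first by move=> [Av Bv] i; split.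
by move=> ABv; split => i; case: (ABv i).
Qed.

Lemma rect_setT : rect (fun _ => setT) = setT.
Proof. by apply/seteqP; split. Qed.

Lemma measurable_tupleE : @measurable _ (m.-tuple R) = <<s rects >>.
Proof.
apply/seteqP; split; last first.
  apply: smallest_sub; first exact: sigma_algebra_measurable.
  by move=> _ [A mA <-]; exact: measurable_rect.
apply: smallest_sub; first exact: smallest_sigma_algebra.
move=> Y; rewrite -bigcup_seq => -[i _ [B mB <-]].
apply: sub_sigma_algebra; exists (fun j => if j == i then B else setT).
  by move=> j /=; case: ifP.
apply/seteqP; split => v /=; first by move=> /(_ i); rewrite eqxx.
by move=> [_ Bv] j; case: ifP => // /eqP ->.
Qed.

Lemma measure_rect_unique (mu nu : {measure set (m.-tuple R) -> \bar R}) :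
  (forall A, (forall i, measurable (A i)) -> mu (rect A) = nu (rect A)) ->
  (mu setT < +oo)%E -> forall X, measurable X -> mu X = nu X.
Proof.
move=> munu mufin X mX.
apply: (measure_unique rects (fun _ => setT)) => //.
- exact: measurable_tupleE.
- move=> _ _ [A mA <-] [B mB <-]; rewrite setI_rect.
  by exists (fun i => A i `&` B i) => // i; exact: measurableI.
- by move=> _; exists (fun _ => setT) => //; exact: rect_setT.
- by rewrite bigcup_const.
- by move=> _ [A mA <-]; exact: munu.
Qed.

End tuple_rectangles.

Section integral_lemmas.
Context d (T : measurableType d) (R : realType).
Variable mu : {measure set T -> \bar R}.
Local Open Scope ereal_scope.

Lemma le_measurable_integral (D : set T) (f g : T -> \bar R) :
  measurable D -> measurable_fun D f -> measurable_fun D g ->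
  (forall x, D x -> f x <= g x) ->
  \int[mu]_(x in D) f x <= \int[mu]_(x in D) g x.
Proof.
move=> mD mf mg fg; rewrite integralE [X in _ <= X]integralE.
have fgD : {in D, forall x, f x <= g x} by move=> x /set_mem; exact: fg.
apply: leeB; apply: (@ge0_le_integral _ _ _ mu D mD).
- by move=> x _; exact: funepos_ge0.
- exact: measurable_funepos.
- exact: measurable_funepos.
- by move=> x Dx; apply: (funepos_le fgD); rewrite inE.
- by move=> x _; exact: funeneg_ge0.
- exact: measurable_funeneg.
- exact: measurable_funeneg.
- by move=> x Dx; apply: (funeneg_le fgD); rewrite inE.
Qed.

Lemma integral_setI_null_setD (D U : set T) (f : T -> \bar R) :
  measurable D -> measurable U -> mu (D `\` U) = 0 -> measurable_fun D f ->
  \int[mu]_(x in D) f x = \int[mu]_(x in D `&` U) f x.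
Proof.
move=> mD mU null_DU mf.
have mDU : measurable (D `&` U) by exact: measurableI.
have mDnU : measurable (D `\` U) by exact: measurableD.
have f_null : \int[mu]_(x in D `\` U) f x = 0.
  by apply: null_set_integral => //; apply: measurable_funS mf => //; exact: subDsetl.
rewrite -[in LHS](setUIDK D U) integral_setU //; last first.
- by rewrite disj_set2E; apply/eqP/seteqP; split => x // [[_ Ux] [_ NUx]].
- by rewrite setUIDK.
by rewrite f_null adde0.
Qed.

Lemma ge0_integral_le_exhaustion (D : set T) (S : (set T)^nat)
    (f : T -> \bar R) (l : \bar R) :
  measurable D -> (forall n, measurable (S n)) -> nondecreasing_seq S ->
  mu (D `\` \bigcup_n S n) = 0 ->
  measurable_fun D f -> (forall x, D x -> 0 <= f x) ->
  (forall n, \int[mu]_(x in D `&` S n) f x <= l) ->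
  \int[mu]_(x in D) f x <= l.
Proof.
move=> mD mS ndS null_out mf f0 fl.
set U := \bigcup_n S n.
have mU : measurable U by exact: bigcupT_measurable.
have mDU : measurable (D `&` U) by exact: measurableI.
have S_sub i j : (i <= j)%N -> S i `<=` S j by move=> ij; apply/subsetPset; exact: ndS.
rewrite (integral_setI_null_setD mD mU null_out mf).
pose g n := f \_ (S n).
have mg n : measurable_fun (D `&` U) (g n).
  apply/(measurable_restrict f (mS n) mDU).
  by apply: measurable_funS mf => // x [[]].
have g0 n x : (D `&` U) x -> 0 <= g n x.
  by move=> [Dx _]; rewrite /g /patch; case: ifP => // _; exact: f0.
have nd_g x : (D `&` U) x -> nondecreasing_seq (g ^~ x).
  move=> [Dx _] i j ij; rewrite /g /patch.
  case: ifPn => [/set_mem Six|_]; last by case: ifP => // _; exact: f0.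
  by rewrite ifT //; apply/mem_set; exact: S_sub ij x Six.
have -> : \int[mu]_(x in D `&` U) f x = \int[mu]_(x in D `&` U) limn (g ^~ x).
  apply: eq_integral => x /[!inE] -[Dx [k _ Skx]].
  apply/esym/cvg_lim => //; apply: cvg_near_cst; exists k => // n /= kn.
  by rewrite /g /patch ifT //; apply/mem_set; exact: S_sub kn x Skx.
have g_cvg := @cvg_monotone_convergence _ _ _ mu _ mDU g mg g0 nd_g.
rewrite -(cvg_lim _ g_cvg) //; apply: lime_le; first by apply/cvg_ex; eexists; exact: g_cvg.
apply: nearW => n; rewrite -integral_mkcondr; apply: le_trans (fl n).
apply: ge0_subset_integral => //.
- exact: measurableI.
- exact: measurableI.
- by apply: measurable_funS mf => // x [].
- by move=> x [Dx _]; exact: f0.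
- by move=> x [[Dx _] Snx].
Qed.

End integral_lemmas.

Section mechanisms.
Variables (R : realType) (m : nat).
Implicit Types (q : m.-tuple R -> 'I_m -> R) (p : m.-tuple R -> R).
Local Notation types := (@types R m).

Definition zero_type : m.-tuple R := [tuple 0 | _ < m].

Lemma types_zero_type : types zero_type.
Proof. by move=> i; rewrite tnth_mktuple. Qed.

Lemma types_rect : types = rect (fun _ => `[0, +oo[%classic).
Proof.
by apply/seteqP; split => v /= tv i; have := tv i; rewrite /= in_itv /= andbT.
Qed.

Lemma measurable_types : measurable types.
Proof.
by rewrite types_rect; apply: measurable_rect => i; exact: measurable_itv.
Qed.

Lemma utility_zero_type q p v : utility q p zero_type v = - p v.
Proof.
by rewrite /utility big1 ?sub0r // => i _; rewrite tnth_mktuple mul0r.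
Qed.

Lemma payment_zero_type_le q p v :
  IC_IR_mechanism q p -> types v -> p zero_type <= p v.
Proof.
case=> _ IC _ _ tv; have := IC _ _ types_zero_type tv.
by rewrite !utility_zero_type lerN2.
Qed.

Lemma payment_zero_type_le0 q p : IC_IR_mechanism q p -> p zero_type <= 0.
Proof.
by case=> _ _ IR _; have := IR _ types_zero_type; rewrite utility_zero_type oppr_ge0.
Qed.

Definition normalize_payment p v := p v - p zero_type.

Lemma IC_IR_normalize_payment q p :
  IC_IR_mechanism q p -> IC_IR_mechanism q (normalize_payment p).
Proof.
move=> M; case: (M) => q01 IC IR mp.
have uE v v' : utility q (normalize_payment p) v v' = utility q p v v' + p zero_type.
  by rewrite /utility /normalize_payment; lra.
split => //.
- by move=> v v' tv tv'; rewrite !uE lerD2r; exact: IC.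
- move=> v tv; rewrite uE.
  have := IC v _ tv types_zero_type; rewrite {1}/utility => ICv0.
  have : 0 <= \sum_(i < m) tnth v i * q zero_type i.
    apply: sumr_ge0 => i _; apply: mulr_ge0; first exact: tv.
    by case/andP: (q01 _ types_zero_type i).
  lra.
- by apply: measurable_funB => //; exact: measurable_cst.
Qed.

Lemma normalize_payment_ge0 q p v :
  IC_IR_mechanism q p -> types v -> 0 <= normalize_payment p v.
Proof. by move=> M tv; rewrite subr_ge0; exact: payment_zero_type_le M tv. Qed.

Lemma le_normalize_payment q p v :
  IC_IR_mechanism q p -> p v <= normalize_payment p v.
Proof. by move/payment_zero_type_le0; rewrite /normalize_payment; lra. Qed.

Lemma measurable_normalize_payment q p :
  IC_IR_mechanism q p -> measurable_fun types (EFin \o normalize_payment p).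
Proof. by case/IC_IR_normalize_payment => _ _ _ mp; exact/measurable_EFinP. Qed.

Local Open Scope ereal_scope.

Lemma integral_le_Rev (G : probability (m.-tuple R) R) q p :
  IC_IR_mechanism q p -> \int[G]_(v in types) (p v)%:E <= Rev G.
Proof. by move=> M; apply: ereal_sup_ubound; exists q, p. Qed.

Lemma integral_le_normalize_payment (G : probability (m.-tuple R) R) q p :
  IC_IR_mechanism q p ->
  \int[G]_(v in types) (p v)%:E <= \int[G]_(v in types) (normalize_payment p v)%:E.
Proof.
move=> M; apply: le_measurable_integral.
- exact: measurable_types.
- by case: M => _ _ _ mp; exact/measurable_EFinP.
- exact: measurable_normalize_payment M.
- by move=> v _; rewrite lee_fin; exact: le_normalize_payment M.
Qed.

Lemma Rev_ge0 (G : probability (m.-tuple R) R) : 0 <= Rev G.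
Proof.
have M0 : IC_IR_mechanism (fun (_ : m.-tuple R) (_ : 'I_m) => 0%R) (fun _ => 0%R).
  split.
  - by move=> v _ i; rewrite lexx ler01.
  - by move=> v v' _ _; rewrite /utility.
  - by move=> v _; rewrite /utility big1 ?subr0 // => i _; rewrite mulr0.
  - exact: measurable_cst.
by apply: le_trans (integral_le_Rev G M0); rewrite integral0_eq.
Qed.

End mechanisms.

Section truncated_products.
Variables (R : realType) (m : nat) (F : probability R R) (a : R)
  (G : probability (m.-tuple R) R) (Gb : R -> probability (m.-tuple R) R).
Hypothesis iidG : is_iid_product G F.
Hypothesis iidGb : forall b, a <= b -> (0 < F `[a, b]%classic)%E ->
  is_iid_product (Gb b) (truncation F a b).
Local Notation types := (@types R m).

Definition box (b : R) : set (m.-tuple R) := rect (fun _ => `[a, b]%classic).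

Definition itv_mass (b : R) : R := fine (F `[a, b]%classic).

Definition truncation_scale (b : R) : R := (itv_mass b ^+ m)^-1.

Let F_fineE X : measurable X -> F X = (fine (F X))%:E.
Proof. by move=> mX; rewrite fineK // fin_num_measure. Qed.

Let F_itv_fineK b : (itv_mass b)%:E = F `[a, b]%classic.
Proof. by rewrite -F_fineE //; exact: measurable_itv. Qed.

Let F_itv_le1 b : itv_mass b <= 1.
Proof. by rewrite -lee_fin F_itv_fineK probability_le1 //; exact: measurable_itv. Qed.

Let subset_itv_cc b b' : b <= b' -> `[a, b]%classic `<=` `[a, b']%classic.
Proof. by move=> bb'; apply: subset_itvl; rewrite bnd_simp. Qed.

Lemma le_box b b' : b <= b' -> box b `<=` box b'.
Proof. by move=> bb' v bv i; exact: subset_itv_cc bb' _ (bv i). Qed.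

Lemma measurable_box b : measurable (box b).
Proof. by apply: measurable_rect => i; exact: measurable_itv. Qed.

Lemma truncation_scale_ge1 b : (0 < F `[a, b]%classic)%E -> 1 <= truncation_scale b.
Proof.
rewrite -F_itv_fineK lte_fin => F0.
have Fm0 : 0 < itv_mass b ^+ m by exact: exprn_gt0.
by rewrite /truncation_scale invr_ge1 ?unitf_gt0 // exprn_ile1 ?F_itv_le1 // ltW.
Qed.

Lemma truncated_productE b X : a <= b -> (0 < F `[a, b]%classic)%E ->
  measurable X -> Gb b X = ((truncation_scale b)%:E * G (X `&` box b))%E.
Proof.
move=> ab F0 mX; set c := itv_mass b.
have Fc : F `[a, b]%classic = c%:E by rewrite F_itv_fineK.
have c0 : 0 < c by rewrite -lte_fin -Fc.
have s0 : 0 <= truncation_scale b by rewrite /truncation_scale invr_ge0 exprn_ge0 // ltW.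
pose nu := mscale (NngNum s0) (mrestr G (measurable_box b)).
apply: (measure_rect_unique (nu := nu)) => //; last first.
  by rewrite [X in (X < _)%E]probability_setT ltry.
move=> A mA.
change (Gb b (rect A) = ((truncation_scale b)%:E * G (rect A `&` box b))%E).
rewrite /box setI_rect.
have mAI i : measurable (A i `&` `[a, b]%classic) by exact: measurableI.
rewrite (iidGb ab F0 mA) (iidG mAI) /truncation Fc inver gt_eqF //.
under eq_bigr do rewrite (F_fineE (mAI _)).
under [in RHS]eq_bigr do rewrite (F_fineE (mAI _)).
rewrite !prodEFin -EFinM; congr EFin.
by rewrite big_split /= prodr_const card_ord exprVn mulrC.
Qed.

Lemma integral_truncated_product b (f : m.-tuple R -> \bar R) :
  a <= b -> (0 < F `[a, b]%classic)%E ->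
  measurable_fun types f -> (forall v, types v -> (0 <= f v)%E) ->
  (\int[Gb b]_(v in types) f v =
   (truncation_scale b)%:E * \int[G]_(v in types `&` box b) f v)%E.
Proof.
move=> ab F0 mf f0.
have mT := @measurable_types R m.
have mB := measurable_box b.
have mTB : measurable (types `&` box b) by exact: measurableI.
rewrite (integral_setI_null_setD (mu := Gb b) mT mB _ mf); last first.
  apply: eq_trans (truncated_productE ab F0 (measurableD mT mB)) _.
  by rewrite setDKI measure0 mule0.
have s0 : 0 <= truncation_scale b by rewrite (le_trans ler01) ?truncation_scale_ge1.
rewrite (eq_measure_integral (mscale (NngNum s0) G)); last first.
  move=> A mA ATB; apply: eq_trans (truncated_productE ab F0 mA) _; congr (_ * G _)%E.
  by apply/seteqP; split => [v [] //|v Av]; split => //; case: (ATB v Av).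
rewrite ge0_integral_mscale //.
- by apply: measurable_funS mf => //; exact: subIsetl.
- by move=> v [tv _]; exact: f0.
Qed.

Lemma Rev_truncated_le b : a <= b -> (0 < F `[a, b]%classic)%E ->
  (Rev (Gb b) <= (truncation_scale b)%:E * Rev G)%E.
Proof.
move=> ab F0; apply: ge_ereal_sup => _ [q [p [M ->]]].
have mT := @measurable_types R m.
apply: le_trans (integral_le_normalize_payment _ M) _.
rewrite integral_truncated_product //; first last.
- by move=> v tv; rewrite lee_fin; exact: normalize_payment_ge0 M tv.
- exact: measurable_normalize_payment M.
apply: lee_wpmul2l; first by rewrite lee_fin (le_trans ler01) ?truncation_scale_ge1.
apply: le_trans (integral_le_Rev G (IC_IR_normalize_payment M)).
apply: ge0_subset_integral => //.
- by apply: measurableI => //; exact: measurable_box.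
- exact: measurable_normalize_payment M.
- by move=> v tv; rewrite lee_fin; exact: normalize_payment_ge0 M tv.
Qed.

Lemma integral_box_le_Rev_truncated q p b0 b :
  IC_IR_mechanism q p -> a <= b0 -> b0 <= b -> (0 < F `[a, b]%classic)%E ->
  (\int[G]_(v in types `&` box b0) (normalize_payment p v)%:E <= Rev (Gb b))%E.
Proof.
move=> M ab0 b0b F0.
have mT := @measurable_types R m.
have p0 v : types v -> (0 <= (normalize_payment p v)%:E)%E.
  by move=> tv; rewrite lee_fin; exact: normalize_payment_ge0 M tv.
apply: le_trans (integral_le_Rev _ (IC_IR_normalize_payment M)).
rewrite integral_truncated_product ?(le_trans ab0) //; last first.
  exact: measurable_normalize_payment M.
apply: le_trans; last first.
  apply: lee_pemull; last by rewrite lee_fin; exact: truncation_scale_ge1.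
  by apply: integral_ge0 => v [tv _]; exact: p0.
apply: ge0_subset_integral => //.
- by apply: measurableI => //; exact: measurable_box.
- by apply: measurableI => //; exact: measurable_box.
- by apply: measurable_funS (measurable_normalize_payment M) => //; exact: subIsetl.
- by move=> v [tv _]; exact: p0.
- by apply: setIS; exact: le_box.
Qed.

Hypothesis F_support : F `[a, +oo[%classic = 1%E.

Lemma bigcup_itv_nat : \bigcup_n `[a, a + n%:R]%classic = `[a, +oo[%classic.
Proof.
apply/seteqP; split => x /=.
  by case=> n _; rewrite /= !in_itv /= andbT => /andP[].
rewrite in_itv /= andbT => ax; exists (Num.Def.archi_bound (x - a)) => //.
rewrite /= in_itv /= ax /= -lerBlDl ltW //.
by apply: archi_boundP; rewrite subr_ge0.
Qed.

Lemma cvg_itv_mass : itv_mass b @[b --> +oo] --> (1 : R).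
Proof.
have mass_nd b b' : b <= b' -> itv_mass b <= itv_mass b'.
  move=> bb'; rewrite /itv_mass fine_le ?fin_num_measure //; try exact: measurable_itv.
  apply: le_measure; rewrite ?inE; try exact: measurable_itv.
  exact: subset_itv_cc.
have F_cvg : F `[a, a + n%:R]%classic @[n --> \oo] --> 1%E.
  rewrite -F_support -bigcup_itv_nat.
  apply: nondecreasing_cvg_mu => [n||]; first exact: measurable_itv.
  - by rewrite bigcup_itv_nat; exact: measurable_itv.
  - by move=> i j ij; apply/subsetPset; apply: subset_itv_cc; rewrite lerD2l ler_nat.
have mass_cvg : itv_mass (a + n%:R) @[n --> \oo] --> (1 : R).
  exact: fine_cvg F_cvg.
apply/cvgrPdist_le => e e0.
have /cvgrPdist_le /(_ e e0) [N _ FN] := mass_cvg.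
near=> b; rewrite ger0_norm ?subr_ge0 ?F_itv_le1 //.
apply: le_trans (FN N (leqnn N)); rewrite ger0_norm ?subr_ge0 ?F_itv_le1 // lerD2l lerN2.
by apply: mass_nd; near: b; apply: nbhs_pinfty_ge; rewrite num_real.
Unshelve. all: by end_near. Qed.

Lemma near_probability_itv_gt0 : \forall b \near +oo, (0 < F `[a, b]%classic)%E.
Proof.
near=> b; rewrite -F_itv_fineK lte_fin.
have : `|1 - itv_mass b| < 1.
  by near: b; move/cvgrPdist_lt: cvg_itv_mass; apply.
by move/ltr_distlDr; rewrite ltrDr.
Unshelve. all: by end_near. Qed.

Lemma cvg_truncation_scale : truncation_scale b @[b --> +oo] --> (1 : R).
Proof.
have Fm_cvg : itv_mass b ^+ m @[b --> +oo] --> (1 ^+ m : R).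
  exact: cvg_comp _ _ cvg_itv_mass (@exprn_continuous R m 1).
rewrite expr1n in Fm_cvg.
by have := cvgV (oner_neq0 _) Fm_cvg; rewrite invr1; apply.
Qed.

Lemma bigcup_box : \bigcup_n box (a + n%:R) = rect (fun _ => `[a, +oo[%classic).
Proof.
apply/seteqP; split => [v [n _ Bv] i | v av].
  by have := Bv i; rewrite /= !in_itv /= andbT => /andP[].
have av_ge0 i : 0 <= tnth v i - a by have := av i; rewrite /= in_itv /= andbT subr_ge0.
have s0 : 0 <= \sum_(i < m) (tnth v i - a) by exact: sumr_ge0.
exists (Num.Def.archi_bound (\sum_(i < m) (tnth v i - a))) => // i.
have := av i; rewrite /= !in_itv /= andbT => -> /=; rewrite -lerBlDl.
apply: le_trans (ltW (archi_boundP s0)).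
by rewrite (bigD1 i) //= lerDl; exact: sumr_ge0.
Qed.

Lemma null_types_setD_boxes : G (types `\` \bigcup_n box (a + n%:R)) = 0%E.
Proof.
have mQ : measurable (rect (fun _ => `[a, +oo[%classic) : set (m.-tuple R)).
  by apply: measurable_rect => i; exact: measurable_itv.
apply/eqP; rewrite eq_le measure_ge0 andbT.
have <- : G (~` rect (fun _ => `[a, +oo[%classic)) = 0%E.
  rewrite probability_setC // (iidG (fun i => measurable_itv _)).
  by rewrite big1 ?subee // => i _; exact: F_support.
apply: le_measure; rewrite ?inE.
- apply: measurableD; first exact: measurable_types.
  by apply: bigcupT_measurable => n; exact: measurable_box.
- exact: measurableC.
- by rewrite bigcup_box => v [].
Qed.

Variable l : R.
Hypothesis Rev_truncated_cvg : Rev (Gb b) @[b --> +oo] --> l%:E.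

Lemma lim_Rev_truncated_le : (Rev G < +oo)%E -> (l%:E <= Rev G)%E.
Proof.
move=> RevG_lty.
have RevG_fin : Rev G \is a fin_num by rewrite ge0_fin_numE // Rev_ge0.
set r := fine (Rev G).
have scale_cvg : (truncation_scale b * r)%:E @[b --> +oo] --> r%:E.
  apply: cvg_EFin; first by apply: nearW.
  by have := cvgMr_tmp (b := r) cvg_truncation_scale; rewrite mul1r; apply.
rewrite -(fineK RevG_fin) -/r; apply: (lee_cvg_to Rev_truncated_cvg scale_cvg).
near=> b; rewrite EFinM /r fineK //; apply: Rev_truncated_le.
- by near: b; apply: nbhs_pinfty_ge; rewrite num_real.
- by near: b; exact: near_probability_itv_gt0.
Unshelve. all: by end_near. Qed.

Lemma Rev_le_lim_Rev_truncated : (Rev G <= l%:E)%E.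
Proof.
apply: ge_ereal_sup => _ [q [p [M ->]]].
apply: le_trans (integral_le_normalize_payment _ M) _.
apply: (ge0_integral_le_exhaustion _ (S := fun n => box (a + n%:R))).
- exact: measurable_types.
- by move=> n; exact: measurable_box.
- by move=> i j ij; apply/subsetPset; apply: le_box; rewrite lerD2l ler_nat.
- exact: null_types_setD_boxes.
- exact: measurable_normalize_payment M.
- by move=> v tv; rewrite lee_fin; exact: normalize_payment_ge0 M tv.
move=> n; apply: (lee_cvg_to (cvg_cst _) Rev_truncated_cvg).
near=> b; apply: integral_box_le_Rev_truncated M _ _ _.
- by rewrite lerDl.
- by near: b; apply: nbhs_pinfty_ge; rewrite num_real.
- by near: b; exact: near_probability_itv_gt0.
Unshelve. all: by end_near. Qed.

End truncated_products.

Unset Implicit Arguments.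
Set Strict Implicit.

Theorem theorem5 (R : realType) (m : nat) (F : probability R R) (a : R)
  (G : probability (m.-tuple R) R) (Gb : R -> probability (m.-tuple R) R) :
  0 <= a ->
  F `[a, +oo[%classic = 1%E ->
  is_iid_product G F ->
  (forall b, a <= b -> (0 < F `[a, b]%classic)%E -> is_iid_product (Gb b) (truncation F a b)) ->
  (Rev G < +oo)%E ->
  forall l : R, Rev (Gb b) @[b --> +oo] --> l%:E ->
  l%:E = Rev G.
Proof.
move=> _ F_support iidG iidGb RevG_fin l Rev_truncated_cvg.
apply/eqP; rewrite eq_le.
rewrite (lim_Rev_truncated_le iidG iidGb F_support Rev_truncated_cvg) //.
exact: (Rev_le_lim_Rev_truncated iidG iidGb F_support Rev_truncated_cvg).
Qed.
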